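(* Consider the Krasovskii-regularized Lur'e system $\dot x\in F(x)$ of the context. Suppose Assumption 1 holds, that $\lim_{s\to0^+}\psi_i(s)>0$ and $\lim_{s\to0^-}\psi_i(s)<0$ for each $i$, and that $\overline\Gamma=\mathrm{diag}(\overline\gamma_1,\dots,\overline\gamma_p)$ with $\overline\gamma_i>0$ satisfies $\overline\Gamma CB+(CB)^\top\overline\Gamma>0$. Let $\nu,c>0$ be constants such that $|u|\ge c$ for all $u\in-\boldsymbol\Psi(y)$ and all $y$ with $0<|y|\le\nu$. Let $\lambda_1>0$ be the smallest eigenvalue of $\overline\Gamma CB+(CB)^\top\overline\Gamma$ and $\lambda_2:=|\overline\Gamma CA|$ (spectral norm). Define $\widetilde W(x):=W(Cx):=2\sum_{i=1}^p\overline\gamma_i\int_0^{C_ix}\psi_i(\sigma)\,d\sigma$. Then there exist $\mu\in(0,\nu]$ with $\omega:=\lambda_1\big(c-2\mu\lambda_2/\lambda_1\big)>0$, and $\alpha_4,\alpha_5\in\mathcal{K}_\infty$, such that $\alpha_4(|Cx|)\le W(Cx)\le\alpha_5(|Cx|)$ for all $x$ with $|x|\le\mu$, and $\sup\dot{\overline{\widetilde W}}_F(x)\le-c\,\omega$ for all $x$ with $|x|\le\mu$ and $Cx\neq0$ (with $\sup\emptyset=-\infty$).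
   Context: System: $\dot x=Ax+Bu$, $y=Cx$, $u=-\boldsymbol\psi(y)$, $x\in\mathbb{R}^n$, $u,y\in\mathbb{R}^p$, $\boldsymbol\psi(y)=(\psi_1(y_1),\dots,\psi_p(y_p))$; $C_i$ is the $i$-th row of $C$. Piecewise continuous: finitely many discontinuities on each bounded interval, continuous between them, finite one-sided limits. Krasovskii regularization: $\boldsymbol\Psi_i(s):=\bigcap_{\delta>0}\overline{\mathrm{co}}\,\psi_i(s+\delta[-1,1])$, $\boldsymbol\Psi(y):=\boldsymbol\Psi_1(y_1)\times\dots\times\boldsymbol\Psi_p(y_p)$, $F(x):=\{Ax-Bw:w\in\boldsymbol\Psi(Cx)\}$. Assumption 1: for each $i$, $\psi_i$ is piecewise continuous and there is $\zeta_i\in(0,+\infty]$ with $\psi_i(s)(\psi_i(s)-\zeta_is)\le0$ for all $s$ (for $\zeta_i=+\infty$: $\psi_i(s)s\ge0$). The generalized gradient of $\widetilde W$ is $\partial\widetilde W(x)=\{2C^\top\overline\Gamma w:w\in\boldsymbol\Psi(Cx)\}$, and the set-valued Lie derivative is $\dot{\overline{\widetilde W}}_F(x):=\{a\in\mathbb{R}:\exists f\in F(x),\ \langle v,f\rangle=a\ \forall v\in\partial\widetilde W(x)\}$. $\mathcal{K}_\infty$: continuous strictly increasing unbounded functions $\mathbb{R}_{\ge0}\to\mathbb{R}_{\ge0}$ vanishing at $0$. *)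

From HB Require Import structures.
From mathcomp Require Import all_boot all_order all_algebra.
From mathcomp Require Import all_classical all_reals all_analysis.
Set Implicit Arguments. Unset Strict Implicit. Unset Printing Implicit Defensive.
Import Order.TTheory GRing.Theory Num.Theory.
Import numFieldNormedType.Exports.
Local Open Scope classical_set_scope.
Local Open Scope ring_scope.

Section Defs.
Variable R : realType.

Definition vnorm k (v : 'cV[R]_k) : R := Num.sqrt (\sum_(i < k) v i 0 ^+ 2).

Definition vdot k (v w : 'cV[R]_k) : R := \sum_(i < k) v i 0 * w i 0.

Definition opnorm m k (M : 'M[R]_(m, k)) : R :=
  sup [set vnorm (M *m v) | v in [set v : 'cV[R]_k | vnorm v <= 1]].

Definition min_eigenvalue k (S : 'M[R]_k) : R := inf [set a : R | eigenvalue S a].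

Definition posdef k (S : 'M[R]_k) : Prop :=
  forall v : 'cV[R]_k, v != 0 -> 0 < (v^T *m S *m v) 0 0.

Definition piecewise_continuous (f : R -> R) : Prop :=
  (forall a b : R, exists s : seq R,
      forall x, a <= x <= b -> x \notin s -> {for x, continuous f}) /\
  (forall x : R, (exists l : R, f t @[t --> x^'+] --> l) /\
                 (exists l : R, f t @[t --> x^'-] --> l)).

(* Assumption 1 sector condition with zeta in (0, +oo] *)
Definition sector (f : R -> R) (zeta : \bar R) : Prop :=
  match zeta with
  | EFin z => 0 < z /\ forall s, f s * (f s - z * s) <= 0
  | +oo%E => forall s, 0 <= f s * s
  | -oo%E => False
  end.

Definition conv (S : set R) : set R :=
  [set y | exists (k : nat) (w z : 'I_k -> R),
      (forall i, 0 <= w i) /\ \sum_(i < k) w i = 1 /\ (forall i, S (z i)) /\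
      y = \sum_(i < k) w i * z i].

Definition Kras (f : R -> R) (s : R) : set R :=
  \bigcap_(d in [set d : R | 0 < d])
     closure (conv [set f t | t in [set t : R | s - d <= t <= s + d]]).

Definition KrasVec p (psi : 'I_p -> R -> R) (y : 'cV[R]_p) : set 'cV[R]_p :=
  [set w | forall i, Kras (psi i) (y i 0) (w i 0)].

Definition Fmap n p (A : 'M[R]_n) (B : 'M[R]_(n, p)) (C : 'M[R]_(p, n))
  (psi : 'I_p -> R -> R) (x : 'cV[R]_n) : set 'cV[R]_n :=
  [set A *m x - B *m w | w in KrasVec psi (C *m x)].

Definition oint (f : R -> R) (a : R) : R :=
  if 0 <= a then Rintegral (@lebesgue_measure R) `[0, a] f
  else - Rintegral (@lebesgue_measure R) `[a, 0] f.

Definition Wfun p (gam : 'I_p -> R) (psi : 'I_p -> R -> R) (y : 'cV[R]_p) : R :=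
  2 * \sum_(i < p) gam i * oint (psi i) (y i 0).

Definition Gam p (gam : 'I_p -> R) : 'M[R]_p := diag_mx (\row_i gam i).

(* generalized gradient of W~ as given: { 2 C^T Gamma w : w in Psi(Cx) } *)
Definition gradW n p (C : 'M[R]_(p, n)) (gam : 'I_p -> R)
  (psi : 'I_p -> R -> R) (x : 'cV[R]_n) : set 'cV[R]_n :=
  [set 2 *: (C^T *m Gam gam *m w) | w in KrasVec psi (C *m x)].

Definition lieW n p (A : 'M[R]_n) (B : 'M[R]_(n, p)) (C : 'M[R]_(p, n))
  (gam : 'I_p -> R) (psi : 'I_p -> R -> R) (x : 'cV[R]_n) : set R :=
  [set a | exists2 f, Fmap A B C psi x f &
             forall v, gradW C gam psi x v -> vdot v f = a].

Definition Kinf (al : R -> R) : Prop :=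
  al 0 = 0 /\ (forall s, 0 <= s -> 0 <= al s) /\
  {within [set s : R | 0 <= s], continuous al} /\
  (forall s t, 0 <= s -> s < t -> al s < al t) /\
  (forall M, exists s, 0 <= s /\ M < al s).

End Defs.

From HB Require Import structures.
From mathcomp Require Import all_boot all_order all_algebra.
From mathcomp Require Import all_classical all_reals all_analysis.
From mathcomp Require Import ring lra measurable_realfun.
Set Implicit Arguments. Unset Strict Implicit. Unset Printing Implicit Defensive.
Import Order.TTheory GRing.Theory Num.Theory.
Import numFieldNormedType.Exports.
Local Open Scope classical_set_scope.
Local Open Scope ring_scope.

(* Write G := Gam gam and S := G (C B) + (C B)^T G, so that lam1 and lam2 are
   the smallest eigenvalue of S and the spectral norm of G C A.  The argument
   has three independent ingredients.
   1. Linear algebra: since S is symmetric positive definite, its smallest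
      eigenvalue is attained by the minimiser of the Rayleigh quotient on the
      unit sphere (compactness), hence lam1 > 0 and w.S w >= lam1 |w|^2.
   2. Integrals: the one-sided limits of psi_i at 0 are nonzero with the
      right signs, so near 0 every psi_i is bounded between two constants of
      the sign of s; integrating gives a |s| <= int_0^s psi_i <= b |s| for
      small s, hence k1 |y| <= W(y) <= k2 |y| near 0 (linear K_infinity
      bounds).  The integral estimates only use the definition of the
      nonnegative integral as a supremum, so no measurability is needed.
   3. Lie derivative: any element of the set-valued Lie derivative equals
      2 w.(G C A x) - w.(S w) for some w in Psi(Cx), and |w| >= c near 0, so
      it is at most 2 |w| lam2 mu - lam1 |w|^2 <= - c (lam1 c - 2 mu lam2).
   The theorem follows by taking mu small enough that |Cx| stays within the
   range of 2. and below nu, and 2 mu lam2 < lam1 c. *)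

Section EuclideanGeometry.
Variable R : realType.
Implicit Types (k : nat).

Lemma sumsq_ge0 k (v : 'cV[R]_k) : 0 <= \sum_(i < k) v i 0 ^+ 2.
Proof. by apply: sumr_ge0 => i _; rewrite sqr_ge0. Qed.

Lemma vnorm_ge0 k (v : 'cV[R]_k) : 0 <= vnorm v.
Proof. exact: sqrtr_ge0. Qed.

Lemma vnorm_sq k (v : 'cV[R]_k) : vnorm v ^+ 2 = \sum_(i < k) v i 0 ^+ 2.
Proof. by rewrite /vnorm sqr_sqrtr // sumsq_ge0. Qed.

Lemma vnorm0 k : vnorm (0 : 'cV[R]_k) = 0.
Proof. by rewrite /vnorm big1 ?sqrtr0 // => i _; rewrite mxE expr0n. Qed.

Lemma vnormZ k (a : R) (v : 'cV[R]_k) : vnorm (a *: v) = `|a| * vnorm v.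
Proof.
rewrite /vnorm (eq_bigr (fun i => a ^+ 2 * v i 0 ^+ 2)); last first.
  by move=> i _; rewrite !mxE exprMn.
by rewrite -mulr_sumr sqrtrM ?sqr_ge0 // sqrtr_sqr.
Qed.

Lemma vnormN k (v : 'cV[R]_k) : vnorm (- v) = vnorm v.
Proof. by rewrite -scaleN1r vnormZ normrN normr1 mul1r. Qed.

Lemma vnorm_gt0 k (v : 'cV[R]_k) : v != 0 -> 0 < vnorm v.
Proof.
apply: contraNT; rewrite -leNgt => v_le0; apply/eqP/matrixP => i j.
have /eqP : \sum_(i < k) v i 0 ^+ 2 = 0.
  by rewrite -vnorm_sq; apply/eqP; rewrite sqrf_eq0 eq_le v_le0 vnorm_ge0.
rewrite psumr_eq0 => [/allP/(_ i (mem_index_enum _))|l _]; last exact: sqr_ge0.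
by rewrite (ord1 j) mxE sqrf_eq0 => /eqP.
Qed.

Lemma coord_le_vnorm k (y : 'cV[R]_k) i : `|y i 0| <= vnorm y.
Proof.
have h : `|y i 0| ^+ 2 <= vnorm y ^+ 2.
  rewrite vnorm_sq real_normK ?num_real // (bigD1 i) //= lerDl.
  by apply: sumr_ge0 => j _; rewrite sqr_ge0.
by rewrite -ler_sqr ?nnegrE ?vnorm_ge0.
Qed.

Lemma vnorm_le_l1 k (y : 'cV[R]_k) : vnorm y <= \sum_(i < k) `|y i 0|.
Proof.
have sq_le : vnorm y ^+ 2 <= (\sum_(i < k) `|y i 0|) ^+ 2.
  rewrite vnorm_sq (eq_bigr (fun i => `|y i 0| ^+ 2)); last first.
    by move=> i _; rewrite real_normK ?num_real.
  elim: (index_enum _) => [|j r IH]; first by rewrite !big_nil expr0n.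
  rewrite !big_cons; have s0 : 0 <= \sum_(i <- r) `|y i 0| by apply: sumr_ge0.
  have := normr_ge0 (y j 0); nra.
by rewrite -ler_sqr ?nnegrE ?vnorm_ge0 // sumr_ge0.
Qed.

Lemma vdotE k (h X : 'cV[R]_k) : (h^T *m X) 0 0 = vdot h X.
Proof. by rewrite mxE; apply: eq_bigr => i _; rewrite mxE. Qed.

Lemma vdotDr k (a b X : 'cV[R]_k) : vdot X (a + b) = vdot X a + vdot X b.
Proof. by rewrite /vdot -big_split; apply: eq_bigr => i _; rewrite mxE mulrDr. Qed.

Lemma vdotDl k (a b X : 'cV[R]_k) : vdot (a + b) X = vdot a X + vdot b X.
Proof. by rewrite /vdot -big_split; apply: eq_bigr => i _; rewrite mxE mulrDl. Qed.

Lemma vdotZr k (t : R) (a X : 'cV[R]_k) : vdot X (t *: a) = t * vdot X a.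
Proof. by rewrite /vdot mulr_sumr; apply: eq_bigr => i _; rewrite mxE mulrCA. Qed.

Lemma vdotZl k (t : R) (a X : 'cV[R]_k) : vdot (t *: a) X = t * vdot a X.
Proof. by rewrite /vdot mulr_sumr; apply: eq_bigr => i _; rewrite mxE mulrA. Qed.

Lemma vdotNr k (a X : 'cV[R]_k) : vdot X (- a) = - vdot X a.
Proof. by rewrite -scaleN1r vdotZr mulN1r. Qed.

Lemma vdotNl k (a X : 'cV[R]_k) : vdot (- a) X = - vdot a X.
Proof. by rewrite -scaleN1r vdotZl mulN1r. Qed.

Lemma vdotC k (a X : 'cV[R]_k) : vdot a X = vdot X a.
Proof. by apply: eq_bigr => i _; rewrite mulrC. Qed.

Lemma vdotvv k (a : 'cV[R]_k) : vdot a a = vnorm a ^+ 2.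
Proof. by rewrite vnorm_sq; apply: eq_bigr => i _; rewrite expr2. Qed.

Lemma vdot_mulmx m k (M : 'M[R]_(m, k)) (u : 'cV[R]_k) (v : 'cV[R]_m) :
  vdot (M *m u) v = vdot u (M^T *m v).
Proof. by rewrite -!vdotE trmx_mul mulmxA. Qed.

Lemma vdot_sym k (M : 'M[R]_k) (a b : 'cV[R]_k) : M^T = M ->
  vdot a (M *m b) = vdot b (M *m a).
Proof. by move=> sM; rewrite vdotC vdot_mulmx sM. Qed.

(* Cauchy-Schwarz, via the nonnegativity of the quadratic t |-> |t u + v|^2. *)
Lemma cauchy_schwarz_sq k (u v : 'cV[R]_k) :
  vdot u v ^+ 2 <= vnorm u ^+ 2 * vnorm v ^+ 2.
Proof.
rewrite -!vdotvv; set A := vdot u u; set B := vdot u v; set D := vdot v v.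
have quad_ge0 t : 0 <= t ^+ 2 * A + 2 * t * B + D.
  have -> : t ^+ 2 * A + 2 * t * B + D = vdot (t *: u + v) (t *: u + v).
    by rewrite !(vdotDl, vdotDr, vdotZl, vdotZr) (vdotC v u) -/A -/B -/D; ring.
  by rewrite vdotvv sqr_ge0.
have A0 : 0 <= A by rewrite /A vdotvv sqr_ge0.
have D0 : 0 <= D by rewrite /D vdotvv sqr_ge0.
have [A_eq0|A_neq0] := eqVneq A 0.
  have u0 : u = 0.
    have [//|/vnorm_gt0 u_pos] := eqVneq u 0.
    by move: A_eq0; rewrite /A vdotvv => /eqP; rewrite sqrf_eq0 gt_eqF.
  by rewrite A_eq0 /B u0 /vdot big1 ?expr0n ?mul0r // => i _; rewrite mxE mul0r.
have Apos : 0 < A by rewrite lt_neqAle eq_sym A_neq0 A0.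
have := quad_ge0 (- B / A).
have -> : (- B / A) ^+ 2 * A + 2 * (- B / A) * B + D = D - B ^+ 2 / A.
  by field.
by rewrite subr_ge0 ler_pdivrMr // mulrC.
Qed.

Lemma vdot_le k (u v : 'cV[R]_k) : vdot u v <= vnorm u * vnorm v.
Proof.
have := cauchy_schwarz_sq u v; rewrite -exprMn => h.
by rewrite (le_trans (ler_norm _)) // -ler_sqr ?nnegrE ?mulr_ge0 ?vnorm_ge0
  ?real_normK ?num_real.
Qed.

End EuclideanGeometry.

Section OperatorNorm.
Variable R : realType.

(* The Frobenius norm: a crude bound showing that the spectral norm is finite. *)
Definition frob m k (M : 'M[R]_(m, k)) : R :=
  Num.sqrt (\sum_(i < m) \sum_(j < k) M i j ^+ 2).

Lemma frob_bound m k (M : 'M[R]_(m, k)) (v : 'cV[R]_k) :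
  vnorm (M *m v) <= frob M * vnorm v.
Proof.
have sq_le : vnorm (M *m v) ^+ 2 <= (frob M * vnorm v) ^+ 2.
  rewrite exprMn !vnorm_sq /frob sqr_sqrtr; last first.
    by apply: sumr_ge0 => i _; apply: sumr_ge0 => j _; rewrite sqr_ge0.
  rewrite mulr_suml; apply: ler_sum => i _.
  have := cauchy_schwarz_sq (\col_j M i j) v; rewrite !vnorm_sq.
  have -> : vdot (\col_j M i j) v = (M *m v) i 0.
    by rewrite /vdot mxE; apply: eq_bigr => j _; rewrite mxE.
  by under eq_bigr do rewrite mxE.
by rewrite -ler_sqr ?nnegrE ?mulr_ge0 ?vnorm_ge0 ?sqrtr_ge0.
Qed.

Lemma opnorm_has_sup m k (M : 'M[R]_(m, k)) :
  has_sup [set vnorm (M *m v) | v in [set v : 'cV[R]_k | vnorm v <= 1]].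
Proof.
split; first by exists (vnorm (M *m 0)), 0 => //=; rewrite vnorm0.
exists (frob M) => _ [v /= v1 <-]; apply: (le_trans (frob_bound M v)).
by rewrite -[leRHS]mulr1 ler_wpM2l ?sqrtr_ge0.
Qed.

Lemma opnorm_ge0 m k (M : 'M[R]_(m, k)) : 0 <= opnorm M.
Proof.
by apply: sup_upper_bound (opnorm_has_sup M) _ _; exists 0; rewrite /= ?mulmx0 vnorm0.
Qed.

Lemma opnorm_le m k (M : 'M[R]_(m, k)) (x : 'cV[R]_k) :
  vnorm (M *m x) <= opnorm M * vnorm x.
Proof.
have [->|x_neq0] := eqVneq x 0; first by rewrite mulmx0 !vnorm0 mulr0.
have xpos := vnorm_gt0 x_neq0.
have : vnorm (M *m ((vnorm x)^-1 *: x)) <= opnorm M.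
  apply: sup_upper_bound (opnorm_has_sup M) _ _; exists ((vnorm x)^-1 *: x) => //=.
  by rewrite vnormZ ger0_norm ?invr_ge0 ?vnorm_ge0 // mulVf // gt_eqF.
rewrite -scalemxAr vnormZ ger0_norm ?invr_ge0 ?vnorm_ge0 // => h.
by rewrite -ler_pdivrMr // mulrC.
Qed.

End OperatorNorm.

Section SmallestEigenvalue.
Variable R : realType.
Variables (p : nat) (S : 'M[R]_p).
Hypothesis S_sym : S^T = S.

Lemma unit_sphere_compact :
  compact [set u : 'rV[R]_p | \sum_(i < p) u 0 i * u 0 i = 1].
Proof.
apply: bounded_closed_compact.
  exists 1; split => // M M1 u u1; rewrite /Num.norm /= mx_normrE.
  apply: bigmax_le => [|[a b] _ /=]; first lra.
  have : u 0 b * u 0 b <= 1.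
    by rewrite -u1 (bigD1 b) //= lerDl; apply: sumr_ge0 => i _; rewrite -expr2 sqr_ge0.
  rewrite (ord1 a) => h.
  by have [|] := lerP 0 (u 0 b) => [/ger0_norm|/ltr0_norm] ->; nra.
apply: (continuous_closedP _).1 (@closed_eq R 1) => u.
apply: continuous_big => [|i _ v]; first exact: add_continuous.
by apply: continuousM; exact: coord_continuous.
Qed.

Lemma rayleigh_minimizer : (0 < p)%N ->
  exists2 z : 'cV[R]_p, vnorm z = 1 &
    forall w : 'cV[R]_p, vnorm w = 1 -> vdot z (S *m z) <= vdot w (S *m w).
Proof.
move=> p_gt0.
pose f (u : 'rV[R]_p) := \sum_(i < p) u 0 i * \sum_(j < p) S i j * u 0 j.
pose K := [set u : 'rV[R]_p | \sum_(i < p) u 0 i * u 0 i = 1].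
have fE (w : 'cV[R]_p) : vdot w (S *m w) = f w^T.
  by apply: eq_bigr => i _; rewrite !mxE; congr (_ * _); apply: eq_bigr => j _; rewrite mxE.
have KE (w : 'cV[R]_p) : K w^T <-> vnorm w = 1.
  rewrite /K /= (eq_bigr (fun i => w i 0 ^+ 2)) => [|i _]; last by rewrite !mxE expr2.
  rewrite -vnorm_sq; split => [|->]; last exact: expr1n.
  by move/eqP; rewrite sqrf_eq1 => /orP[/eqP //|/eqP w1]; have := vnorm_ge0 w; lra.
have K_neq0 : K !=set0.
  exists (\row_j (j == Ordinal p_gt0)%:R); rewrite /K /=.
  rewrite (bigD1 (Ordinal p_gt0)) //= big1 ?addr0; first by rewrite !mxE eqxx mulr1.
  by move=> i /negbTE ni; rewrite !mxE ni mulr0.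
have f_cont : continuous f.
  apply: continuous_big => [|i _ x]; first exact: add_continuous.
  apply: continuousM; first exact: coord_continuous.
  apply: continuous_big => [|j _ y]; first exact: add_continuous.
  by apply: continuousM; [exact: cst_continuous | exact: coord_continuous].
have [u /set_mem Ku umin] :=
  EVT_min_rV K_neq0 unit_sphere_compact (continuous_subspaceT f_cont).
exists u^T; first by apply/KE; rewrite trmxK.
by move=> w /KE Kw; rewrite !fE trmxK; apply: umin; rewrite inE.
Qed.

Lemma rayleigh_lower_bound (z : 'cV[R]_p) : vnorm z = 1 ->
  (forall w : 'cV[R]_p, vnorm w = 1 -> vdot z (S *m z) <= vdot w (S *m w)) ->
  forall w, vdot z (S *m z) * vnorm w ^+ 2 <= vdot w (S *m w).
Proof.
move=> z1 zmin w; have [->|w_neq0] := eqVneq w 0.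
  by rewrite vnorm0 expr0n /= mulr0 mulmx0 /vdot big1 // => i _; rewrite mxE mulr0.
have wpos := vnorm_gt0 w_neq0.
have := zmin ((vnorm w)^-1 *: w).
rewrite vnormZ ger0_norm ?invr_ge0 ?vnorm_ge0 // mulVf ?gt_eqF // => /(_ erefl).
rewrite -scalemxAr (vdotZl (vnorm w)^-1) (vdotZr (vnorm w)^-1) mulrA -expr2 exprVn ler_pdivlMl ?exprn_gt0 //.
by rewrite mulrC.
Qed.

(* A minimiser of the Rayleigh quotient is an eigenvector: the form of
   S - m I is nonnegative and vanishes at z, so z lies in its kernel. *)
Lemma rayleigh_minimizer_eigenvector (z : 'cV[R]_p) : vnorm z = 1 ->
  (forall w : 'cV[R]_p, vnorm w = 1 -> vdot z (S *m z) <= vdot w (S *m w)) ->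
  S *m z = vdot z (S *m z) *: z.
Proof.
move=> z1 zmin; set m := vdot z (S *m z).
pose T := S - m%:M.
have T_sym : T^T = T by rewrite /T linearB /= S_sym tr_scalar_mx.
have TE h : vdot h (T *m h) = vdot h (S *m h) - m * vnorm h ^+ 2.
  by rewrite /T mulmxBl vdotDr vdotNr mul_scalar_mx vdotZr vdotvv.
have T_ge0 h : 0 <= vdot h (T *m h).
  by rewrite TE subr_ge0 rayleigh_lower_bound.
have Tz : vdot z (T *m z) = 0 by rewrite TE z1 expr1n mulr1 subrr.
have Tz_orth h : vdot h (T *m z) = 0.
  set b := vdot h (T *m z); set e := vdot h (T *m h).
  have e0 : 0 <= e by exact: T_ge0.
  have := T_ge0 (z - (b / (e + 1)) *: h).
  rewrite mulmxBr -scalemxAr !(vdotDl, vdotDr, vdotNl, vdotNr, vdotZl, vdotZr) Tz.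
  rewrite (vdot_sym z h T_sym) -/b -/e; set t := b / (e + 1) => h_ge0.
  have bE : b = t * (e + 1) by rewrite /t divfK // gt_eqF //; lra.
  have t0 : t = 0.
    apply/eqP; rewrite -sqrf_eq0 eq_le sqr_ge0 andbT.
    by move: h_ge0; rewrite bE; nra.
  by rewrite bE t0 mul0r.
apply/eqP; rewrite -subr_eq0 -mul_scalar_mx -mulmxBl -/T; apply/eqP/matrixP => i j.
rewrite (ord1 j) [RHS]mxE -(Tz_orth (delta_mx i 0)) /vdot (bigD1 i) //= big1 ?addr0.
  by rewrite [delta_mx i 0 i 0]mxE !eqxx mul1r.
by move=> l /negbTE li; rewrite [delta_mx i 0 l 0]mxE li mul0r.
Qed.

Lemma min_eigenvalue_rayleigh : (0 < p)%N -> posdef S ->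
  0 < min_eigenvalue S /\
  forall w : 'cV[R]_p, min_eigenvalue S * vnorm w ^+ 2 <= vdot w (S *m w).
Proof.
move=> p_gt0 S_pd; have [z z1 zmin] := rayleigh_minimizer p_gt0.
set m := vdot z (S *m z).
have z_neq0 : z != 0 by apply/eqP => z0; move: z1; rewrite z0 vnorm0; lra.
have m_pos : 0 < m by have := S_pd z z_neq0; rewrite -mulmxA vdotE.
have m_eig : eigenvalue S m.
  apply/eigenvalueP; exists z^T; last by rewrite trmx_eq0.
  by rewrite -{1}S_sym -trmx_mul rayleigh_minimizer_eigenvector // linearZ.
have m_lb : lbound [set a | eigenvalue S a] m.
  move=> a /eigenvalueP [v vS v_neq0].
  have vpos : 0 < vnorm v^T by apply: vnorm_gt0; rewrite trmx_eq0.
  have := rayleigh_lower_bound z1 zmin v^T.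
  have -> : vdot v^T (S *m v^T) = a * vnorm v^T ^+ 2.
    by rewrite -vdotvv -vdotZr -!vdotE trmxK -{1}S_sym -trmx_mul -linearZ /= -vS.
  by rewrite ler_pM2r // exprn_gt0.
have -> : min_eigenvalue S = m.
  apply/le_anti/andP; split; last by apply: lb_le_inf => //; exists m.
  by apply: ge_inf => //; exists m.
by split=> // w; exact: rayleigh_lower_bound.
Qed.

End SmallestEigenvalue.

Section IntegralBounds.
Variable R : realType.
Local Notation mu := (@lebesgue_measure R).
Local Open Scope ereal_scope.

(* Monotonicity of the integral of nonnegative functions; since this
   integral is a supremum over simple functions, no measurability is needed. *)
Lemma ge0_integral_le (f g : R -> \bar R) :
  (forall x, 0 <= f x) -> (forall x, f x <= g x) ->
  \int[mu]_x f x <= \int[mu]_x g x.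
Proof.
move=> f0 fg; have g0 x : 0 <= g x by exact: le_trans (f0 x) (fg x).
rewrite !ge0_integralTE //; apply: ereal_sup_le => _ [h hf <-]; exists h => //.
by move=> x; exact: le_trans (hf x) (fg x).
Qed.

Lemma patch_cst_ge0 (A : set R) (c : R) :
  (0 <= c)%R -> forall x, 0 <= (cst c%:E \_ A) x.
Proof. by move=> c0 x; rewrite /patch; case: ifP; rewrite // lee_fin. Qed.

Lemma integral_patch_cst (A : set R) (c : R) : measurable A ->
  \int[mu]_x (cst c%:E \_ A) x = c%:E * mu A.
Proof. by move=> mA; rewrite -integral_mkcond integral_cst. Qed.

Lemma measurable_patch_cst (A : set R) (c : R) : measurable A ->
  measurable_fun setT (cst c%:E \_ A).
Proof. by move=> mA; apply/(measurable_restrictT _ mA); exact: measurable_cst. Qed.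

Lemma lebesgue_measure_oo (u v : R) : (u <= v)%R -> mu `]u, v[%classic = (v - u)%:E.
Proof.
move=> uv; rewrite lebesgue_measure_itv /=; case: ifPn; first by rewrite lte_fin.
rewrite lte_fin -leNgt => vu; have -> : v = u by apply/le_anti/andP.
by rewrite subrr.
Qed.

Lemma ge0_integral_itv_ge (g : R -> \bar R) (u v a : R) : (u <= v)%R -> (0 <= a)%R ->
  (forall x, 0 <= g x) -> (forall t, (u < t < v)%R -> a%:E <= g t) ->
  (a * (v - u))%:E <= \int[mu]_(x in `[u, v]) g x.
Proof.
move=> uv a0 g0 ga; rewrite integral_mkcond EFinM -lebesgue_measure_oo //.
rewrite -integral_patch_cst //; apply: ge0_integral_le => x.
  exact: patch_cst_ge0.
rewrite /patch; case: ifPn => [/set_mem /= xI|_]; last by case: ifP.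
rewrite mem_set; first exact: ga.
by move: xI; rewrite !in_itv /= => /andP[ux xv]; rewrite in_itv /= !ltW.
Qed.

(* Upper bound on a closed interval from an upper bound on its interior:
   the finite values at the two endpoints only cost a null set. *)
Lemma ge0_integral_itv_le (g : R -> \bar R) (u v b : R) : (u <= v)%R -> (0 <= b)%R ->
  (forall x, 0 <= g x) -> g u \is a fin_num -> g v \is a fin_num ->
  (forall t, (u < t < v)%R -> g t <= b%:E) ->
  \int[mu]_(x in `[u, v]) g x <= (b * (v - u))%:E.
Proof.
move=> uv b0 g0 gu gv gb.
have gu0 : (0 <= fine (g u))%R by rewrite -lee_fin fineK.
have gv0 : (0 <= fine (g v))%R by rewrite -lee_fin fineK.
pose H x := (cst b%:E \_ `]u, v[%classic) x +
  ((cst (fine (g u))%:E \_ [set u]) x + (cst (fine (g v))%:E \_ [set v]) x).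
have H0 x : 0 <= H x by rewrite !adde_ge0 // patch_cst_ge0.
have int_H : \int[mu]_x H x = (b * (v - u))%:E.
  rewrite ge0_integralD //; last 4 first.
  - by move=> x _; exact: patch_cst_ge0.
  - exact: measurable_patch_cst.
  - by move=> x _; rewrite adde_ge0 // patch_cst_ge0.
  - by apply: emeasurable_funD; exact: measurable_patch_cst.
  rewrite ge0_integralD //; last 4 first.
  - by move=> x _; exact: patch_cst_ge0.
  - exact: measurable_patch_cst.
  - by move=> x _; exact: patch_cst_ge0.
  - exact: measurable_patch_cst.
  rewrite !integral_patch_cst // !lebesgue_measure_set1 !mule0 !adde0.
  by rewrite lebesgue_measure_oo.
rewrite integral_mkcond -int_H; apply: ge0_integral_le => x.
  by rewrite /patch; case: ifP.
rewrite {1}/patch; case: ifPn => [/set_mem /= |_]; last exact: H0.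
rewrite in_itv /= => /andP[ux xv]; rewrite /H /patch.
have [<-|x_neq_u] := eqVneq u x.
  rewrite [in X in _ <= X + _]ifF; last by apply/negbTE; rewrite notin_setE /= in_itv /= ltxx.
  by rewrite mem_set // fineK // add0e leeDl // patch_cst_ge0.
have [xv_eq|x_neq_v] := eqVneq x v.
  rewrite {}xv_eq in x_neq_u *.
  rewrite [in X in _ <= X + _]ifF; last by apply/negbTE; rewrite notin_setE /= in_itv /= ltxx andbF.
  rewrite [in X in _ <= _ + (X + _)]ifF; last first.
    by apply/negbTE; rewrite notin_setE /= => vu; move: x_neq_u; rewrite -vu eqxx.
  by rewrite mem_set // fineK // !add0e.
have xI : (u < x < v)%R by rewrite !lt_neqAle ux xv x_neq_u x_neq_v.
rewrite mem_set; last by rewrite /= in_itv /=.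
by apply: le_trans (gb x xI) _; rewrite leeDl // adde_ge0 // patch_cst_ge0.
Qed.

Lemma ge0_integral_itv_bounds (g : R -> \bar R) (u v a b : R) : (u <= v)%R ->
  (0 <= a)%R -> (0 <= b)%R -> (forall x, 0 <= g x) ->
  g u \is a fin_num -> g v \is a fin_num ->
  (forall t, (u < t < v)%R -> a%:E <= g t <= b%:E) ->
  (a * (v - u))%:E <= \int[mu]_(x in `[u, v]) g x <= (b * (v - u))%:E.
Proof.
move=> uv a0 b0 g0 gu gv gab; rewrite ge0_integral_itv_ge //; last first.
  by move=> t /gab /andP[].
by apply: ge0_integral_itv_le => // t /gab /andP[].
Qed.

Lemma fine_between (x : \bar R) (lo hi : R) :
  lo%:E <= x <= hi%:E -> (lo <= fine x <= hi)%R.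
Proof. by case: x => [r||] /andP[h1 h2] //=; rewrite -!lee_fin h1 h2. Qed.

(* Real-valued integrals of functions of constant sign on the interior are
   obtained from the integrals of the positive and negative parts. *)
Lemma Rintegral_itv_bounds (f : R -> R) (u v a b : R) :
  (u <= v)%R -> (0 <= a)%R -> (0 <= b)%R ->
  ((forall t, (u < t < v)%R -> (a <= f t <= b)%R) ->
     (a * (v - u) <= Rintegral mu `[u, v] f <= b * (v - u))%R) /\
  ((forall t, (u < t < v)%R -> (- b <= f t <= - a)%R) ->
     (- (b * (v - u)) <= Rintegral mu `[u, v] f <= - (a * (v - u)))%R).
Proof.
move=> uv a0 b0; set F := fun x => (f x)%:E.
have posE x : F^\+ x = (Num.max (f x) 0)%:E by rewrite funeposE EFin_max.
have negE x : F^\- x = (Num.max (- f x) 0)%:E by rewrite funenegE EFin_max.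
have pos_fin x : F^\+ x \is a fin_num by rewrite posE.
have neg_fin x : F^\- x \is a fin_num by rewrite negE.
have zero_int (g : R -> \bar R) : (forall x, 0 <= g x) -> g u \is a fin_num ->
    g v \is a fin_num -> (forall t, (u < t < v)%R -> g t = 0) ->
    \int[mu]_(x in `[u, v]) g x = 0.
  move=> g0 gu gv gt; apply/le_anti; rewrite integral_ge0 //= andbT.
  apply: le_trans (ge0_integral_itv_le uv (lexx 0) g0 gu gv _) _.
    by move=> t /gt ->.
  by rewrite mul0r.
rewrite /Rintegral integralE; split => f_bd.
- rewrite (zero_int (F^\-)) ?sube0 //; last first.
    by move=> t /f_bd /andP[f_ge _]; rewrite negE max_r //; lra.
  apply: fine_between; apply: ge0_integral_itv_bounds => // t /f_bd /andP[? ?].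
  by rewrite posE !lee_fin max_l //; [apply/andP | lra].
- rewrite (zero_int (F^\+)) ?add0e //; last first.
    by move=> t /f_bd /andP[_ f_le]; rewrite posE max_r //; lra.
  have : (a * (v - u))%:E <= \int[mu]_(x in `[u, v]) F^\- x <= (b * (v - u))%:E.
    apply: ge0_integral_itv_bounds => // t /f_bd /andP[? ?].
    by rewrite negE !lee_fin max_l //; [apply/andP; split; lra | lra].
  by move=> /fine_between; rewrite fineN; lra.
Qed.

End IntegralBounds.

Section LocalBoundsOfW.
Variable R : realType.

Lemma oint_bounds (f : R -> R) (a b d : R) : 0 <= a -> 0 <= b ->
  (forall t, 0 < t <= d -> a <= f t <= b) ->
  (forall t, - d <= t < 0 -> - b <= f t <= - a) ->
  forall s, `|s| <= d -> a * `|s| <= oint f s <= b * `|s|.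
Proof.
move=> a0 b0 f_right f_left s s_le; rewrite /oint; case: ifPn => s0.
- have := (Rintegral_itv_bounds f s0 a0 b0).1; rewrite subr0 ger0_norm //; apply.
  move=> t /andP[t0 ts]; apply: f_right; move: s_le; rewrite ger0_norm //.
  by move=> sd; rewrite t0 /=; lra.
- rewrite -ltNge in s0; rewrite ltr0_norm //.
  have := (Rintegral_itv_bounds f (ltW s0) a0 b0).2; rewrite sub0r.
  have sd : - d <= s by move: s_le; rewrite ltr0_norm // lerNl.
  by move=> /(_ _)/andP[|h1 h2]; [move=> t /andP[? ?]; apply: f_left; apply/andP; split; lra
    | apply/andP; split; lra].
Qed.

Lemma right_limit_bounds (f : R -> R) (l : R) : 0 < l -> f t @[t --> 0^'+] --> l ->
  exists2 d, 0 < d & forall t, 0 < t <= d -> l / 2 <= f t <= 3 * l / 2.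
Proof.
move=> l0 /cvgrPdist_lt /(_ (l / 2)) /(_ ltac:(lra)) [e /= e0 He].
exists (e / 2) => [|t /andP[t0 te]]; first lra.
have : `|l - f t| < l / 2 by apply: He => //=; rewrite sub0r normrN ger0_norm; lra.
by rewrite ltr_norml => /andP[h1 h2]; apply/andP; split; lra.
Qed.

Lemma left_limit_bounds (f : R -> R) (l : R) : l < 0 -> f t @[t --> 0^'-] --> l ->
  exists2 d, 0 < d & forall t, - d <= t < 0 -> 3 * l / 2 <= f t <= l / 2.
Proof.
move=> l0 /cvgrPdist_lt /(_ (- l / 2)) /(_ ltac:(lra)) [e /= e0 He].
exists (e / 2) => [|t /andP[t0 te]]; first lra.
have : `|l - f t| < - l / 2 by apply: He => //=; rewrite sub0r normrN ltr0_norm; lra.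
by rewrite ltr_norml => /andP[h1 h2]; apply/andP; split; lra.
Qed.

Lemma oint_local_bounds (f : R -> R) :
  (exists2 l : R, 0 < l & f t @[t --> 0^'+] --> l) ->
  (exists2 l : R, l < 0 & f t @[t --> 0^'-] --> l) ->
  exists t : R * R * R, [/\ 0 < t.1.1, 0 < t.1.2, 0 < t.2 &
    forall s, `|s| <= t.2 -> t.1.1 * `|s| <= oint f s <= t.1.2 * `|s|].
Proof.
move=> [lr lr0 hr] [ll ll0 hl].
have [dr dr0 Hr] := right_limit_bounds lr0 hr.
have [dl dl0 Hl] := left_limit_bounds ll0 hl.
set a := Num.min (lr / 2) (- ll / 2); set b := Num.max (3 * lr / 2) (- (3 * ll / 2)).
have a0 : 0 < a by rewrite lt_min; apply/andP; split; lra.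
have b0 : 0 < b by rewrite lt_max; apply/orP; left; lra.
exists (a, b, Num.min dr dl); split => //=; first by rewrite lt_min dr0 dl0.
apply: oint_bounds; rewrite ?ltW //.
- move=> t /andP[t0]; rewrite le_min => /andP[tr _].
  have /andP[h1 h2] := Hr t (ltac:(by rewrite t0 tr)).
  by rewrite /a /b; apply/andP; split; [rewrite ge_min h1 | rewrite le_max h2].
- move=> t /andP[]; rewrite lerNl le_min => /andP[_ tl] t0.
  have /andP[h1 h2] := Hl t (ltac:(by rewrite t0 andbT lerNl)).
  rewrite /a /b; apply/andP; split.
    by rewrite lerNl le_max; apply/orP; right; lra.
  by rewrite lerNr ge_min; apply/orP; right; lra.
Qed.

Lemma finite_pos_lower_bound p (x : 'I_p -> R) : (forall i, 0 < x i) ->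
  exists2 m, 0 < m & forall i, m <= x i.
Proof.
move=> x_gt0; have s0 : 0 <= \sum_(i < p) (x i)^-1.
  by apply: sumr_ge0 => i _; rewrite invr_ge0 ltW.
exists (1 + \sum_(i < p) (x i)^-1)^-1 => [|i]; first by rewrite invr_gt0; lra.
rewrite -[leRHS]invrK lef_pV2 ?posrE ?invr_gt0 //; last lra.
rewrite (bigD1 i) //= addrCA lerDl addr_ge0 // sumr_ge0 // => j _.
by rewrite invr_ge0 ltW.
Qed.

Lemma finite_upper_bound p (x : 'I_p -> R) : exists2 M, 0 < M & forall i, x i <= M.
Proof.
have s0 : 0 <= \sum_(i < p) `|x i| by apply: sumr_ge0 => i _.
exists (1 + \sum_(i < p) `|x i|) => [|i]; first lra.
apply: (le_trans (ler_norm _)); rewrite (bigD1 i) //= addrCA lerDl addr_ge0 //.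
exact: sumr_ge0.
Qed.

Lemma uniform_oint_bounds p (psi : 'I_p -> R -> R) :
  (forall i, exists2 l : R, 0 < l & psi i t @[t --> 0^'+] --> l) ->
  (forall i, exists2 l : R, l < 0 & psi i t @[t --> 0^'-] --> l) ->
  exists a b d : R, [/\ 0 < a, 0 < b, 0 < d &
    forall i s, `|s| <= d -> a * `|s| <= oint (psi i) s <= b * `|s|].
Proof.
move=> hr hl; have [t ht] := choice (fun i => oint_local_bounds (hr i) (hl i)).
have [a a0 a_le] : exists2 a, 0 < a & forall i, a <= (t i).1.1.
  by apply: finite_pos_lower_bound => i; case: (ht i).
have [d d0 d_le] : exists2 d, 0 < d & forall i, d <= (t i).2.
  by apply: finite_pos_lower_bound => i; case: (ht i).
have [b b0 b_ge] := finite_upper_bound (fun i => (t i).1.2).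
exists a, b, d; split => // i s sd.
have [_ bi0 _ /(_ s (le_trans sd (d_le i)))/andP[lo hi]] := ht i.
have s0 := normr_ge0 s.
by rewrite (le_trans _ lo) ?(le_trans hi) // ler_wpM2r.
Qed.

Lemma Wfun_local_bounds p (gam : 'I_p -> R) (psi : 'I_p -> R -> R) :
  (forall i, 0 < gam i) ->
  (forall i, exists2 l : R, 0 < l & psi i t @[t --> 0^'+] --> l) ->
  (forall i, exists2 l : R, l < 0 & psi i t @[t --> 0^'-] --> l) ->
  exists k1 k2 d : R, [/\ 0 < k1, 0 < k2, 0 < d &
    forall y : 'cV[R]_p, vnorm y <= d ->
      k1 * vnorm y <= Wfun gam psi y <= k2 * vnorm y].
Proof.
move=> gam0 hr hl; have [a [b [d [a0 b0 d0 oint_bd]]]] := uniform_oint_bounds hr hl.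
have [g g0 g_le] := finite_pos_lower_bound gam0.
have sg0 : 0 <= \sum_(i < p) gam i by apply: sumr_ge0 => i _; exact: ltW.
exists (2 * g * a), (2 * b * (1 + \sum_(i < p) gam i)), d.
split; rewrite ?mulr_gt0 //; try lra.
move=> y yd; have yi_bd i := oint_bd i (y i 0) (le_trans (coord_le_vnorm y i) yd).
have y0 := vnorm_ge0 y; rewrite /Wfun; apply/andP; split.
- have : g * a * vnorm y <= \sum_(i < p) gam i * oint (psi i) (y i 0).
    apply: le_trans (_ : g * a * \sum_(i < p) `|y i 0| <= _).
      by rewrite ler_wpM2l ?vnorm_le_l1 // mulr_ge0 // ltW.
    rewrite mulr_sumr; apply: ler_sum => i _.
    have /andP[lo _] := yi_bd i.
    rewrite -mulrA (le_trans _ (ler_wpM2l (ltW (gam0 i)) lo)) // ler_wpM2r //.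
    by rewrite mulr_ge0 // ltW.
  lra.
- have : \sum_(i < p) gam i * oint (psi i) (y i 0) <= b * (\sum_(i < p) gam i) * vnorm y.
    rewrite mulrAC mulr_sumr; apply: ler_sum => i _.
    have /andP[_ hi] := yi_bd i.
    rewrite (le_trans (ler_wpM2l (ltW (gam0 i)) hi)) // mulrC.
    by rewrite ler_wpM2r ?(ltW (gam0 i)) // ler_wpM2l ?(ltW b0) // coord_le_vnorm.
  have := mulr_ge0 (ltW b0) y0.
  nra.
Qed.

Lemma Kinf_linear (k : R) : 0 < k -> Kinf (fun r => k * r).
Proof.
move=> k0; split; first by rewrite mulr0.
split; first by move=> s s0; rewrite mulr_ge0 // ltW.
split.
  apply: continuous_subspaceT => x; apply: continuousM; first exact: cst_continuous.
  exact: cvg_id.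
split; first by move=> s t _ st; rewrite ltr_pM2l.
move=> M; exists ((`|M| + 1) / k); split; first by rewrite divr_ge0 ?ltW.
by rewrite mulrC divfK ?gt_eqF //; have := ler_norm M; lra.
Qed.

End LocalBoundsOfW.

(* For r >= c the concave quadratic 2 r K - lam1 r^2 is at most its value at
   c, which is negative when 2 K < lam1 c. *)
Lemma quadratic_decay (R : realFieldType) (lam1 K c r : R) : 0 < lam1 -> 0 <= c <= r ->
  2 * K < lam1 * c -> 2 * r * K - lam1 * r ^+ 2 <= - (c * (lam1 * c - 2 * K)).
Proof.
move=> l0 /andP[c0 cr] Kc.
have lam1_cr : lam1 * c <= lam1 * r by rewrite ler_wpM2l // ltW.
have lam1_c : 0 <= lam1 * c by rewrite mulr_ge0 // ltW.
have : 0 <= (r - c) * (lam1 * (r + c) - 2 * K) by apply: mulr_ge0; lra.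
nra.
Qed.

Section LieDerivative.
Variable R : realType.
Variables (n p : nat) (A : 'M[R]_n) (B : 'M[R]_(n, p)) (C : 'M[R]_(p, n)).
Variables (gam : 'I_p -> R) (psi : 'I_p -> R -> R).

Local Notation G := (Gam gam).
Local Notation S := (G *m (C *m B) + (C *m B)^T *m G).

Lemma Gam_sym : G^T = G.
Proof. exact: tr_diag_mx. Qed.

Lemma lyap_matrix_sym : S^T = S.
Proof. by rewrite linearD /= trmx_mul [X in _ + X]trmx_mul trmxK Gam_sym addrC. Qed.

Lemma lieW_value x a : lieW A B C gam psi x a ->
  exists2 w, KrasVec psi (C *m x) w &
    a = 2 * vdot w (G *m C *m A *m x) - vdot w (S *m w).
Proof.
move=> [_ [w hw <-] grad]; exists w => //.
rewrite -(grad (2 *: (C^T *m G *m w))); last by exists w.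
rewrite vdotZl vdot_mulmx trmx_mul trmxK Gam_sym mulmxBr vdotDr vdotNr.
rewrite mulmxDl vdotDr.
have -> : vdot w ((C *m B)^T *m G *m w) = vdot w (G *m (C *m B) *m w).
  by rewrite -mulmxA -vdot_mulmx vdotC vdot_mulmx Gam_sym mulmxA.
by rewrite !mulmxA; ring.
Qed.

Lemma lieW_le x a (lam1 L c : R) : 0 < lam1 -> 0 <= c -> 2 * L < lam1 * c ->
  (forall w, lam1 * vnorm w ^+ 2 <= vdot w (S *m w)) ->
  vnorm (G *m C *m A *m x) <= L ->
  (forall w, KrasVec psi (C *m x) w -> c <= vnorm w) ->
  lieW A B C gam psi x a -> a <= - (c * (lam1 * c - 2 * L)).
Proof.
move=> lam1_pos c0 L_lt lam1_bd GCAx_le w_ge /lieW_value [w /w_ge wc ->].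
have GCAx : vdot w (G *m C *m A *m x) <= vnorm w * L.
  by rewrite (le_trans (vdot_le _ _)) // ler_wpM2l ?vnorm_ge0.
have c_le_w : 0 <= c <= vnorm w by rewrite c0 wc.
by have := quadratic_decay lam1_pos c_le_w L_lt; have := lam1_bd w; lra.
Qed.

End LieDerivative.

Unset Implicit Arguments.

Theorem proposition2 (R : realType) (n p : nat)
  (A : 'M[R]_n) (B : 'M[R]_(n, p)) (C : 'M[R]_(p, n))
  (psi : 'I_p -> R -> R) (zeta : 'I_p -> \bar R) (gam : 'I_p -> R)
  (nu c : R) :
  (0 < p)%N ->
  (forall i, piecewise_continuous (psi i) /\ sector (psi i) (zeta i)) ->
  (forall i, exists2 l : R, 0 < l & psi i t @[t --> 0^'+] --> l) ->
  (forall i, exists2 l : R, l < 0 & psi i t @[t --> 0^'-] --> l) ->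
  (forall i, 0 < gam i) ->
  posdef (Gam gam *m (C *m B) + (C *m B)^T *m Gam gam) ->
  0 < nu -> 0 < c ->
  (forall y : 'cV[R]_p, 0 < vnorm y <= nu ->
     forall w, KrasVec psi y w -> c <= vnorm (- w)) ->
  let lam1 := min_eigenvalue (Gam gam *m (C *m B) + (C *m B)^T *m Gam gam) in
  let lam2 := opnorm (Gam gam *m C *m A) in
  exists mu : R, [/\ 0 < mu, mu <= nu &
    let om := lam1 * (c - 2 * mu * lam2 / lam1) in
    0 < om /\
    exists al4 al5 : R -> R, [/\ Kinf al4, Kinf al5,
      (forall x : 'cV[R]_n, vnorm x <= mu ->
         al4 (vnorm (C *m x)) <= Wfun gam psi (C *m x) <= al5 (vnorm (C *m x))) &
      (forall x : 'cV[R]_n, vnorm x <= mu -> C *m x != 0 ->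
         (ereal_sup [set a%:E | a in lieW A B C gam psi x] <= (- (c * om))%:E)%E)]].
Proof.
move=> p_gt0 _ hr hl gam0 S_pd nu0 c0 hc lam1 lam2.
have [lam1_pos lam1_bd] := min_eigenvalue_rayleigh (lyap_matrix_sym B C gam) p_gt0 S_pd.
have lam2_ge0 : 0 <= lam2 := opnorm_ge0 _.
have [k1 [k2 [d [k1_pos k2_pos d_pos W_bd]]]] := Wfun_local_bounds gam0 hr hl.
set K := opnorm C; have K0 : 0 <= K := opnorm_ge0 C.
set e := Num.min (Num.min nu d) (lam1 * c / (4 * lam2 + 1)).
have e_pos : 0 < e by rewrite !lt_min nu0 d_pos divr_gt0 ?mulr_gt0 //; lra.
have [e_nu e_d] : e <= nu /\ e <= d by rewrite !ge_min !lexx orbT.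
have e_lam : e * (4 * lam2 + 1) <= lam1 * c by rewrite -ler_pdivlMr ?ge_min ?lexx ?orbT; lra.
pose mu := e / (K + 1).
have mu_pos : 0 < mu by rewrite divr_gt0 //; lra.
have [mu_e Kmu_e] : mu <= e /\ K * mu <= e.
  have mu_K1 : mu * (K + 1) = e by rewrite divfK // gt_eqF //; lra.
  have := mulr_ge0 K0 (ltW mu_pos); split; nra.
have Cx_small x : vnorm x <= mu -> vnorm (C *m x) <= e.
  by move=> xmu; rewrite (le_trans (opnorm_le C x)) // (le_trans _ Kmu_e) ?ler_wpM2l.
have omE : lam1 * (c - 2 * mu * lam2 / lam1) = lam1 * c - 2 * (mu * lam2).
  by field; rewrite gt_eqF.
exists mu; split; rewrite ?omE; [done | lra | split; first nra].
exists (fun r => k1 * r), (fun r => k2 * r); split; try exact: Kinf_linear.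
  by move=> x /Cx_small Cx_e; apply: W_bd; lra.
move=> x xmu Cx_neq0; apply: ge_ereal_sup => _ [a ha <-]; rewrite lee_fin.
apply: (lieW_le lam1_pos (ltW c0) _ lam1_bd _ _ ha); first nra.
  by rewrite (le_trans (opnorm_le _ x)) // mulrC ler_wpM2r.
move=> w hw; rewrite -vnormN (hc (C *m x)) // vnorm_gt0 //=.
by have := Cx_small x xmu; lra.
Qed.
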